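(* Every language in SNP can be described by a primitive canonical formula. Moreover, if the original canonical formula is monotone, or monadic, or without inequality, then the primitive formula can be chosen to satisfy the same restrictions.
   Context: Structures are finite relational structures of a fixed finite signature $\Delta$; a language is a class of such structures closed under isomorphism. A language $L$ is in SNP if it is the class of structures $\mathbf A$ satisfying a canonical formula \[\exists \Pi\ \forall \overline{x}\ \bigwedge_i \neg\big(\alpha_i\wedge\beta_i\wedge\varepsilon_i\big),\] where $\Pi$ is a finite set of existentially quantified relation symbols (''proof relations'') on the universe of $\mathbf A$, $\overline x$ is a tuple of first-order variables, each $\alpha_i$ is a conjunction of atoms or negated atoms $R(\overline x)$, $\neg R(\overline x)$ with $R\in\Delta$ (input relations), each $\beta_i$ is a conjunction of atoms or negated atoms $P(\overline x)$, $\neg P(\overline x)$ with $P\in\Pi$, and each $\varepsilon_i$ is a conjunction of inequalities $x\neq y$ between variables. The formula is monotone if no $\alpha_i$ contains a negated atom; monadic if all $P\in\Pi$ are unary; without inequality if no $\varepsilon_i$ occurs. The formula is primitive if for every clause $\alpha_i\wedge\beta_i\wedge\varepsilon_i$, every existential relation $P\in\Pi$ of arity $r$ and all variables $x_1,\dots,x_r$ occurring in that clause, either the atom $P(x_1,\dots,x_r)$ or its negation is a conjunct of the clause. *)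

From mathcomp Require Import all_boot.
From Stdlib Require List.
Set Implicit Arguments. Unset Strict Implicit. Unset Printing Implicit Defensive.

Inductive lit (S : Type) (ar : S -> nat) (V : Type) : Type :=
  Lit (pos : bool) (R : S) (args : (ar R).-tuple V).
Arguments Lit {S ar V} pos R args.

Definition lit_pos (S : Type) (ar : S -> nat) (V : Type) (l : lit ar V) : bool := let: Lit b _ _ := l in b.
Definition lit_vars (S : Type) (ar : S -> nat) (V : Type) (l : lit ar V) : seq V := let: Lit _ _ t := l in val t.

Definition lit_holds S (ar : S -> nat) V (A : Type)
  (I : forall R : S, pred ((ar R).-tuple A)) (s : V -> A) (l : lit ar V) : bool :=
  let: Lit b R t := l in I R (map_tuple s t) == b.

Section Formulas.
Variables (D : finType) (arD : D -> nat).

Record structure := Structure {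
  univ : finType;
  interp : forall R : D, pred ((arD R).-tuple univ) }.

(* a language: a class of structures (isomorphism closure is automatic for
   languages described by a formula) *)
Definition language := structure -> Prop.

Record clause (V : Type) (P : Type) (arP : P -> nat) := Clause {
  alpha : seq (lit arD V);
  beta  : seq (lit arP V);
  eps   : seq (V * V) }.

Definition clause_vars (V P : Type) (arP : P -> nat) (c : clause V arP) : seq V :=
  flatten (map (@lit_vars _ _ _) (alpha c)) ++
  flatten (map (@lit_vars _ _ _) (beta c)) ++
  flatten [seq [:: e.1; e.2] | e <- eps c].

(* canonical formula  exists Pi forall x_1..x_nvar  /\_i ~(alpha_i /\ beta_i /\ eps_i)
   with Pi = {P_0, ..., P_(npi-1)} of arities arP *)
Record formula := Formula {
  nvar : nat;
  npi : nat;
  arP : 'I_npi -> nat;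
  clauses : seq (clause 'I_nvar arP) }.

Definition clause_holds (A : structure) (V P : Type) (arP : P -> nat)
  (IP : forall p : P, pred ((arP p).-tuple (univ A))) (s : V -> univ A)
  (c : clause V arP) : bool :=
  [&& all (lit_holds (@interp A) s) (alpha c),
      all (lit_holds IP s) (beta c) &
      all (fun e => s e.1 != s e.2) (eps c)].

Definition models (F : formula) (A : structure) : Prop :=
  exists IP : forall p : 'I_(npi F), pred ((arP p).-tuple (univ A)),
    forall s : 'I_(nvar F) -> univ A,
      all (fun c => ~~ clause_holds IP s c) (clauses F).

Definition describes (F : formula) (L : language) : Prop :=
  forall A : structure, L A <-> models F A.

Definition in_SNP (L : language) : Prop := exists F, describes F L.

Definition monotone (F : formula) : Prop :=
  all (fun c => all (@lit_pos _ _ _) (alpha c)) (clauses F).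

Definition monadic (F : formula) : Prop := forall p : 'I_(npi F), arP p = 1.

Definition without_inequality (F : formula) : Prop :=
  all (fun c => nilp (eps c)) (clauses F).

Definition primitive (F : formula) : Prop :=
  forall c, List.In c (clauses F) ->
  forall (p : 'I_(npi F)) (t : (arP p).-tuple 'I_(nvar F)),
    (forall i, tnth t i \in clause_vars c) ->
    exists b : bool, List.In (Lit b p t) (beta c).

End Formulas.

From mathcomp Require Import all_boot.
From Stdlib Require List.

Set Implicit Arguments. Unset Strict Implicit. Unset Printing Implicit Defensive.

(* Replace every clause c by all its completions: for each truth assignment f
   to the proof atoms P(x_1, ..., x_r) over the variables, the clause c_f adds
   the literal P(x_1, ..., x_r) with sign f to c.  Every c_f implies c, and
   under fixed proof relations and variable assignment, c holds exactly when
   the completion whose signs are read off these proof relations holds.  So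
   the new formula has the same models, is primitive by construction, and
   keeps the input literals, inequalities and proof relations of the old one. *)

Lemma all_flatten (T : Type) (a : pred T) (ss : seq (seq T)) :
  all a (flatten ss) = all (all a) ss.
Proof. by elim: ss => [|s ss IH] //=; rewrite all_cat IH. Qed.

Lemma In_flatten_map (A B : Type) (g : A -> seq B) (s : seq A) (x : B) :
  List.In x (flatten (map g s)) -> exists2 y, List.In y s & List.In x (g y).
Proof.
elim: s => [|a s IH] //= xgas.
case: (List.in_app_or _ _ _ xgas) => [xga|/IH [y ys xgy]]; first by exists a; [left|].
by exists y; [right|].
Qed.

Lemma mem_In (T : eqType) (x : T) (s : seq T) : x \in s -> List.In x s.
Proof. by elim: s => [|a s IH] //=; rewrite inE => /predU1P [->|/IH]; [left|right]. Qed.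

Section Completion.

Variables (D : finType) (arD : D -> nat).
Variables (V P : finType) (arP : P -> nat).

Definition proof_atom : finType :=
  Finite.clone {p : P & (arP p).-tuple V} _.

Definition atom_lit (f : {ffun proof_atom -> bool}) (a : proof_atom) :
  lit arP V := Lit (f a) (tag a) (tagged a).

Definition complete_clause (c : clause arD V arP) (f : {ffun proof_atom -> bool}) :
  clause arD V arP :=
  Clause (alpha c) (beta c ++ map (atom_lit f) (enum proof_atom)) (eps c).

Definition completions (c : clause arD V arP) : seq (clause arD V arP) :=
  map (complete_clause c) (enum {ffun proof_atom -> bool}).

Lemma In_beta_complete_clause c (f : {ffun proof_atom -> bool}) (p : P) (t : (arP p).-tuple V) :
  List.In (Lit (f (Tagged _ t)) p t) (beta (complete_clause c f)).
Proof.
apply/List.in_or_app; right.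
apply: (List.in_map (atom_lit f) _ (Tagged _ t)).
exact/mem_In/mem_enum.
Qed.

Lemma In_completions c c' :
  List.In c' (completions c) -> exists f, c' = complete_clause c f.
Proof. by case/List.in_map_iff => f [<- _]; exists f. Qed.

Variables (A : structure arD) (IP : forall p : P, pred ((arP p).-tuple (univ A))).
Variable s : V -> univ A.

Definition atom_signs : {ffun proof_atom -> bool} :=
  [ffun a => @IP (tag a) (map_tuple s (tagged a))].

Lemma clause_holds_complete c f :
  clause_holds IP s (complete_clause c f) -> clause_holds IP s c.
Proof.
rewrite /clause_holds /= all_cat.
by case/and3P => -> /andP [-> _] ->.
Qed.

Lemma clause_holds_complete_signs c :
  clause_holds IP s c -> clause_holds IP s (complete_clause c atom_signs).
Proof.
rewrite /clause_holds /= all_cat => /and3P [-> -> ->] /=.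
by rewrite andbT all_map; apply/allP => a _; rewrite /= ffunE eqxx.
Qed.

Lemma has_clause_holds_completions c :
  has (clause_holds IP s) (completions c) = clause_holds IP s c.
Proof.
rewrite has_map; apply/hasP/idP => [[f _ /clause_holds_complete //]|cs].
by exists atom_signs; [rewrite mem_enum | exact: clause_holds_complete_signs].
Qed.

End Completion.

Definition completion (D : finType) (arD : D -> nat) (F : formula arD) :
  formula arD :=
  Formula (flatten (map (@completions D arD _ _ (@arP _ _ F)) (clauses F))).

Section CompletionProperties.

Variables (D : finType) (arD : D -> nat) (F : formula arD).

Lemma models_completion (A : structure arD) :
  models (completion F) A <-> models F A.
Proof.
suff no_clause_holds (IP : forall p, pred ((arP p).-tuple (univ A)))
    (s : 'I_(nvar F) -> univ A) :
  all (fun c => ~~ clause_holds IP s c) (clauses (completion F)) =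
  all (fun c => ~~ clause_holds IP s c) (clauses F).
  by split=> -[IP H]; exists IP => s; move: (H s); rewrite no_clause_holds.
rewrite /completion /= all_flatten all_map; apply: eq_all => c /=.
by rewrite all_predC has_clause_holds_completions.
Qed.

Lemma completion_primitive : primitive (completion F).
Proof.
move=> c' c'F; have [c _ /In_completions [f ->]] := In_flatten_map c'F.
by move=> p t _; eexists; apply: In_beta_complete_clause.
Qed.

Lemma completion_monotone : monotone F -> monotone (completion F).
Proof.
rewrite /monotone /completion /= all_flatten all_map; apply: sub_all => c alpha_pos /=.
by rewrite all_map; apply/allP => f _.
Qed.

Lemma completion_without_inequality :
  without_inequality F -> without_inequality (completion F).
Proof.
rewrite /without_inequality /completion /= all_flatten all_map; apply: sub_all => c no_eps /=.
by rewrite all_map; apply/allP => f _.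
Qed.

End CompletionProperties.

Theorem lemma4 (D : finType) (arD : D -> nat) (L : language arD)
  (F : formula arD) :
  describes F L ->
  exists G : formula arD,
    [/\ primitive G, describes G L,
        monotone F -> monotone G,
        monadic F -> monadic G &
        without_inequality F -> without_inequality G].
Proof.
move=> FL; exists (completion F); split.
- exact: completion_primitive.
- by move=> A; rewrite FL models_completion.
- exact: completion_monotone.
- by [].
- exact: completion_without_inequality.
Qed.
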